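(* Let $\mathcal{H}_A,\mathcal{H}_B,\mathcal{H}_C$ be finite-dimensional Hilbert spaces with fixed reference bases of $\mathcal{H}_A$ and $\mathcal{H}_B$ (and the product basis on $\mathcal{H}_A\otimes\mathcal{H}_B$). For every state $\rho_{ABC}$ on $\mathcal{H}_A\otimes\mathcal{H}_B\otimes\mathcal{H}_C$ with reduced states $\rho_{AC},\rho_{BC}$, $$C^{AB|C}_f(\rho_{ABC})\geq C^{A|BC}_f(\rho_{ABC})+C^{B|C}_f(\rho_{BC}),$$ and consequently $$C^{AB|C}_f(\rho_{ABC})\geq C^{A|C}_f(\rho_{AC})+C^{B|C}_f(\rho_{BC}).$$
   Context: $S$ is the von Neumann entropy. For a bipartite split $X|Y$ where $X$ has a fixed reference basis $\{|k\rangle_X\}$, $\Delta_X(\rho)=\sum_k(|k\rangle\langle k|_X\otimes I_Y)\rho(|k\rangle\langle k|_X\otimes I_Y)$. The IQ coherence of formation is $C^{X|Y}_f(\rho_{XY})=\min\sum_ip_iS(\Delta_X(|\psi_i\rangle\langle\psi_i|_{XY}))$, minimized over all pure-state decompositions $\rho_{XY}=\sum_ip_i|\psi_i\rangle\langle\psi_i|_{XY}$. *)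

From HB Require Import structures.
From mathcomp Require Import all_boot all_order all_algebra.
From mathcomp Require Import all_classical all_reals.
From mathcomp Require Import exp.
From mathcomp Require Import complex.

Set Implicit Arguments.
Unset Strict Implicit.
Unset Printing Implicit Defensive.

Import Order.TTheory GRing.Theory Num.Theory.
Local Open Scope ring_scope.
Local Open Scope classical_set_scope.
Local Open Scope sesquilinear_scope.
Local Open Scope complex_scope.

(* A finite-dimensional Hilbert space with a
   fixed reference (computational) basis is modelled by a finite index type T:
   the space is C^T, the reference basis is the standard basis {|t>, t : T}.
   Operators on C^T are square matrices of size #|T| (rows/columns indexed
   through enum_rank / enum_val).  A composite system X (x) Y is indexed by
   the product type X * Y, whose product basis is |x>|y>. *)

Section QI.
Variable R : realType.
Local Notation CC := (R[i]).

Definition sqmx (T : finType) := 'M[CC]_#|T|.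
Definition cvec (T : finType) := 'cV[CC]_#|T|.

Definition ent (T : finType) (A : sqmx T) (x y : T) : CC :=
  A (enum_rank x) (enum_rank y).
Definition mkmx (T : finType) (f : T -> T -> CC) : sqmx T :=
  \matrix_(i, j) f (enum_val i) (enum_val j).

Definition psdmx n (M : 'M[CC]_n) : Prop :=
  M ^t* = M /\ forall v : 'cV[CC]_n, 0 <= (v ^t* *m M *m v) 0 0.

Definition density n (M : 'M[CC]_n) : Prop := psdmx M /\ \tr M = 1.

(* eigenvalues, with algebraic multiplicity: the roots of the characteristic
   polynomial *)
Definition eigvals n (M : 'M[CC]_n) : seq CC :=
  sval (closed_field_poly_normal (char_poly M)).

Definition xlnx (t : R) : R := if t == 0 then 0 else t * ln t.

(* von Neumann entropy S(M) = - Tr (M ln M) = - sum_lambda lambda ln lambda *)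
Definition vN_entropy n (M : 'M[CC]_n) : R :=
  - \sum_(l <- eigvals M) xlnx (complex.Re l).

Definition dephase (X Y : finType) (M : sqmx (X * Y)%type) : sqmx (X * Y)%type :=
  mkmx (fun u v => if u.1 == v.1 then ent M u v else 0).

Definition ketbra n (psi : 'cV[CC]_n) : 'M[CC]_n := psi *m psi ^t*.

Definition pure_decomp n (rho : 'M[CC]_n) (k : nat)
    (p : 'I_k -> R) (psi : 'I_k -> 'cV[CC]_n) : Prop :=
  [/\ forall i, 0 <= p i,
      \sum_i p i = 1,
      forall i, (psi i) ^t* *m psi i = 1%:M
    & rho = \sum_i (p i)%:C *: ketbra (psi i)].

Definition coh_form (X Y : finType) (rho : sqmx (X * Y)%type) : R :=
  inf [set s : R | exists (k : nat) (p : 'I_k -> R)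
                          (psi : 'I_k -> cvec (X * Y)%type),
         pure_decomp rho p psi /\
         s = \sum_i p i * vN_entropy (dephase (ketbra (psi i)))].

Variables (A B C : finType).

(* regrouping (A B) C  ~>  A (B C): the same operator, viewed for the
   bipartition A | BC *)
Definition regroup (rho : sqmx ((A * B) * C)%type) : sqmx (A * (B * C))%type :=
  mkmx (fun u v => ent rho ((u.1, u.2.1), u.2.2) ((v.1, v.2.1), v.2.2)).

Definition ptrace_A (rho : sqmx ((A * B) * C)%type) : sqmx (B * C)%type :=
  mkmx (fun u v => \sum_(a : A) ent rho ((a, u.1), u.2) ((a, v.1), v.2)).
Definition ptrace_B (rho : sqmx ((A * B) * C)%type) : sqmx (A * C)%type :=
  mkmx (fun u v => \sum_(b : B) ent rho ((u.1, b), u.2) ((v.1, b), v.2)).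

End QI.

(* Fix a pure-state decomposition {p_i, psi_i} of rho_ABC and put
   q_i(a,b) = sum_c |psi_i(a,b,c)|^2.  Dephasing a pure state psi of X (x) Y in
   the basis of X gives W W^*, where the columns of W are the slices psi(x,.);
   since W^* W is diagonal, its entropy is the Shannon entropy of the marginal
   of |psi|^2 on X.  So the decomposition costs sum_i p_i H(AB)_{q_i} for
   C_f^{AB|C}.  The same vectors, regrouped, decompose rho for the cut A|BC at
   cost sum_i p_i H(A)_{q_i}, and the renormalised slices psi_i(a,.,.)
   (resp. psi_i(.,b,.)) decompose rho_BC (resp. rho_AC) at cost
   sum_i p_i H(B|A)_{q_i} (resp. H(A|B)_{q_i}).  The chain rule
   H(A) + H(B|A) = H(AB) and subadditivity H(AB) <= H(A) + H(B) compare these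
   costs termwise, and taking infima over decompositions gives both
   inequalities. *)

From HB Require Import structures.
From mathcomp Require Import all_boot all_order all_algebra.
From mathcomp Require Import all_classical all_reals.
From mathcomp Require Import exp.
From mathcomp Require Import complex.
From mathcomp Require Import ring lra.

Set Implicit Arguments.
Unset Strict Implicit.
Unset Printing Implicit Defensive.

Import Order.TTheory GRing.Theory Num.Theory.
Local Open Scope ring_scope.
Local Open Scope classical_set_scope.
Local Open Scope complex_scope.
Local Open Scope sesquilinear_scope.

Lemma char_poly_mulmxC (F : comNzRingType) n m (W : 'M[F]_(n, m)) (V : 'M[F]_(m, n)) :
  'X^m * char_poly (W *m V) = 'X^n * char_poly (V *m W).
Proof.
pose Wp := map_mx polyC W; pose Vp := map_mx polyC V.
pose M := block_mx ('X%:M : 'M_n) Wp Vp (1%:M : 'M_m).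
have M_lu : M = block_mx 1%:M Wp 0 1%:M *m block_mx ('X%:M - Wp *m Vp) 0 Vp 1%:M.
  by rewrite mulmx_block ?mul1mx ?mul0mx ?mulmx0 ?mulmx1 ?addr0 ?add0r subrK.
have M_ul : M *m block_mx 1%:M (- Wp) 0 ('X%:M) =
            block_mx ('X%:M) 0 Vp ('X%:M - Vp *m Wp).
  rewrite mulmx_block ?mulmx1 ?mulmx0 ?addr0 ?mul1mx mulmxN.
  by rewrite mul_scalar_mx mul_mx_scalar addNr mulmxN [- _ + _]addrC.
have detM : \det M = char_poly (W *m V).
  rewrite M_lu det_mulmx det_ublock det_lblock !det1 !mul1r mulr1.
  by rewrite /char_poly /char_poly_mx map_mxM.
have := congr1 determinant M_ul.
rewrite det_mulmx detM det_ublock det_lblock !det_scalar expr1n mul1r => detMU.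
by rewrite mulrC detMU /char_poly /char_poly_mx map_mxM.
Qed.

Lemma sum_pair (V : nmodType) (X Y : finType) (F : X * Y -> V) :
  \sum_(t : X * Y) F t = \sum_x \sum_y F (x, y).
Proof. by rewrite pair_bigA; apply: congr_big => // -[]. Qed.

Lemma sum_fst_eq (V : nmodType) (X Y : finType) (x : X) (F : X * Y -> V) :
  \sum_(t : X * Y) (if t.1 == x then F t else 0) = \sum_y F (x, y).
Proof.
rewrite sum_pair (bigD1 x) //= [X in _ + X]big1 ?addr0.
  by apply: eq_bigr => y _; rewrite eqxx.
by move=> a /negbTE ha; rewrite big1 // => y _; rewrite ha.
Qed.

Lemma big_ord_enum_rank (V : Type) (idx : V) (op : Monoid.com_law idx)
    (T : finType) (F : 'I_#|T| -> V) :
  \big[op/idx]_(r < #|T|) F r = \big[op/idx]_(t : T) F (enum_rank t).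
Proof.
rewrite (reindex enum_rank) //.
by exists enum_val => x _; [exact: enum_rankK | exact: enum_valK].
Qed.

Section SquaredModulus.
Variable R : rcfType.
Implicit Types z : R[i].

Definition sqnormc z : R := complex.Re z ^+ 2 + complex.Im z ^+ 2.

Lemma mul_conjC_sqnormc z : Num.conj z * z = (sqnormc z)%:C.
Proof.
case: z => a b; rewrite /sqnormc /=; simpc.
by apply/eqP; rewrite eq_complex /=; apply/andP; split; apply/eqP; ring.
Qed.

Lemma sqnormc_ge0 z : 0 <= sqnormc z.
Proof. by rewrite addr_ge0 // sqr_ge0. Qed.

Lemma sqnormc_eq0 z : sqnormc z = 0 -> z = 0.
Proof.
case: z => a b; rewrite /sqnormc /= => /eqP.
by rewrite paddr_eq0 ?sqr_ge0 // !sqrf_eq0 => /andP[/eqP-> /eqP->].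
Qed.

Lemma sqnormc0 : sqnormc 0 = 0.
Proof. by rewrite /sqnormc /= expr0n /= addr0. Qed.

Lemma sqnormc1 : sqnormc 1 = 1.
Proof. by rewrite /sqnormc /= expr1n expr0n /= addr0. Qed.

Lemma sqnormcMr z (c : R) : sqnormc (z * c%:C) = sqnormc z * c ^+ 2.
Proof. by case: z => a b; rewrite /sqnormc /=; simpc; rewrite /=; ring. Qed.

Lemma psumr_sqnormc_eq0 (T : finType) (g : T -> R[i]) :
  \sum_t sqnormc (g t) = 0 -> forall t, g t = 0.
Proof.
by move=> h t; apply: sqnormc_eq0; apply: (psumr_eq0P _ h) => // s _; exact: sqnormc_ge0.
Qed.

Lemma complex_ge0_real z : 0 <= z -> z = (complex.Re z)%:C.
Proof. by case: z => a b; rewrite lecE /= => /andP[/eqP-> _]. Qed.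

End SquaredModulus.

Section Coordinates.
Variables (R : realType) (T : finType).
Local Notation CC := R[i].

Definition amp (psi : cvec R T) (t : T) : CC := psi (enum_rank t) 0.
Definition cvec_of (f : T -> CC) : cvec R T := \col_r f (enum_val r).

Lemma amp_cvec_of f t : amp (cvec_of f) t = f t.
Proof. by rewrite /amp /cvec_of mxE enum_rankK. Qed.

Lemma ent_mkmx (f : T -> T -> CC) x y : ent (mkmx f) x y = f x y.
Proof. by rewrite /ent /mkmx mxE !enum_rankK. Qed.

Lemma sqmxP (M N : sqmx R T) : (forall x y, ent M x y = ent N x y) -> M = N.
Proof.
move=> eqMN; apply/matrixP => i j.
by have := eqMN (enum_val i) (enum_val j); rewrite /ent !enum_valK.
Qed.

Lemma ent_ketbra (psi : cvec R T) x y :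
  ent (ketbra psi) x y = amp psi x * Num.conj (amp psi y).
Proof. by rewrite /ent /ketbra mxE big_ord1 !mxE. Qed.

Lemma ent_sum (I : finType) (M : I -> sqmx R T) x y :
  ent (\sum_i M i) x y = \sum_i ent (M i) x y.
Proof. by rewrite /ent summxE. Qed.

Lemma entZ (c : CC) (M : sqmx R T) x y : ent (c *: M) x y = c * ent M x y.
Proof. by rewrite /ent mxE. Qed.

Lemma cvec_unitP (psi : cvec R T) :
  psi ^t* *m psi = 1%:M <-> \sum_t sqnormc (amp psi t) = 1.
Proof.
have normE : (psi ^t* *m psi) 0 0 = (\sum_t sqnormc (amp psi t))%:C.
  rewrite mxE big_ord_enum_rank rmorph_sum; apply: eq_bigr => t _.
  by rewrite !mxE mul_conjC_sqnormc.
split => [psi1|norm1].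
  by apply: complexI; rewrite -normE psi1 mxE eqxx rmorph1.
by apply/matrixP => i j; rewrite !ord1 normE norm1 mxE eqxx.
Qed.

End Coordinates.

Lemma char_poly_eigvals (R : realType) n (M : 'M[R[i]]_n) :
  char_poly M = \prod_(z <- eigvals M) ('X - z%:P).
Proof.
rewrite /eigvals; case: closed_field_poly_normal => r /= ->.
by rewrite (monicP (char_poly_monic M)) scale1r.
Qed.

Lemma xlnx0 (R : realType) : xlnx (0 : R) = 0.
Proof. by rewrite /xlnx eqxx. Qed.

(* Zero eigenvalues do not contribute to the entropy, so the padding by
   powers of 'X may be discarded. *)
Lemma vN_entropy_char_poly (R : realType) n m n' (M : 'M[R[i]]_n) (s : seq R[i]) :
  'X^m * char_poly M = 'X^n' * \prod_(z <- s) ('X - z%:P) ->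
  vN_entropy M = - \sum_(z <- s) xlnx (complex.Re z).
Proof.
have prod_nseq0 k : \prod_(z <- nseq k (0 : R[i])) ('X - z%:P) = 'X^k.
  by elim: k => [|k IHk]; rewrite ?big_nil ?expr0 //= big_cons IHk subr0 exprS.
have sum_nseq0 k : \sum_(z <- nseq k (0 : R[i])) xlnx (complex.Re z) = 0.
  by elim: k => [|k IHk]; rewrite ?big_nil //= big_cons IHk xlnx0 addr0.
rewrite char_poly_eigvals -!prod_nseq0 -!big_cat => /prod_XsubC_eq eig_perm.
have := perm_big _ eig_perm (op := +%R) (x := 0) (P := xpredT)
  (F := fun z => xlnx (complex.Re z)).
by rewrite !big_cat /= !sum_nseq0 !add0r /vN_entropy => ->.
Qed.

Definition shannon (R : realType) (T : finType) (d : T -> R) : R :=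
  - \sum_t xlnx (d t).

Section DephasedPureState.
Variables (R : realType) (X Y : finType) (psi : cvec R (X * Y)%type).

(* Column x of this matrix is the slice psi(x, .). *)
Definition dephase_factor : 'M[R[i]]_(#|{: X * Y}%type|, #|X|) :=
  \matrix_(r, s) if enum_rank (enum_val r).1 == s then psi r 0 else 0.

Definition dephase_weights : 'rV[R[i]]_#|X| :=
  \row_s \sum_r (if enum_rank (enum_val r).1 == s then (sqnormc (psi r 0))%:C else 0).

Lemma dephase_ketbraE :
  dephase (ketbra psi) = dephase_factor *m dephase_factor ^t*.
Proof.
apply/matrixP => i j; rewrite /dephase /mkmx !mxE ent_ketbra /amp !enum_valK.
rewrite (bigD1 (enum_rank (enum_val i).1)) //= !mxE eqxx big1 ?addr0; last first.
  by move=> s /negbTE; rewrite eq_sym !mxE => ->; rewrite mul0r.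
rewrite (inj_eq enum_rank_inj) eq_sym.
by case: ifP => _ //; rewrite conjC0 mulr0.
Qed.

Lemma dephase_factor_gram :
  dephase_factor ^t* *m dephase_factor = diag_mx dephase_weights.
Proof.
apply/matrixP => s s'; rewrite !mxE.
have [<-|neq_ss'] := eqVneq s s'; rewrite ?mulr1n ?mulr0n.
  apply: eq_bigr => r _; rewrite !mxE.
  by case: ifP => _; rewrite ?conjC0 ?mul0r // mul_conjC_sqnormc.
apply: big1 => r _; rewrite !mxE.
case: ifP => /eqP e1; case: ifP => /eqP e2; rewrite ?conjC0 ?mulr0 ?mul0r //.
by move: neq_ss'; rewrite -e1 -e2 eqxx.
Qed.

Lemma entropy_dephase_ketbra :
  vN_entropy (dephase (ketbra psi)) =
  shannon (fun x : X => \sum_(y : Y) sqnormc (amp psi (x, y))).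
Proof.
have := char_poly_mulmxC dephase_factor (dephase_factor ^t*).
rewrite -dephase_ketbraE dephase_factor_gram.
rewrite (char_poly_trig (diag_mx_is_trig dephase_weights)) -big_enum /=.
rewrite -(big_map (fun i => diag_mx dephase_weights i i) xpredT (fun z => 'X - z%:P)).
move/vN_entropy_char_poly->; rewrite big_map big_enum /= big_ord_enum_rank.
congr (- _); apply: eq_bigr => x _; congr xlnx.
rewrite !mxE eqxx mulr1n raddf_sum /= big_ord_enum_rank.
rewrite -(sum_fst_eq x (fun t => sqnormc (amp psi t))); apply: eq_bigr => t _.
by rewrite /amp enum_rankK (inj_eq enum_rank_inj); case: (t.1 == x).
Qed.

End DephasedPureState.

Section Shannon.
Variable R : realType.

Lemma xlnxE (t : R) : xlnx t = t * ln t.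
Proof. by rewrite /xlnx; case: eqP => [->|//]; rewrite mul0r. Qed.

Lemma shannon_ge0 (T : finType) (d : T -> R) :
  (forall t, 0 <= d t <= 1) -> 0 <= shannon d.
Proof.
move=> d01; rewrite oppr_ge0; apply: sumr_le0 => t _.
by have /andP[d0 d1] := d01 t; rewrite xlnxE mulr_ge0_le0 // ln_le0.
Qed.

Lemma ln_le_subr1 (x : R) : 0 < x -> ln x <= x - 1.
Proof.
move=> x0; have := @le_ln1Dx R (x - 1).
by rewrite [1 + _]addrC subrK; apply; rewrite ltrBrDl subrr.
Qed.

Lemma mulr_xlnx_div (x y : R) : 0 <= x -> 0 < y ->
  y * xlnx (x / y) = xlnx x - x * ln y.
Proof.
move=> x0 y0; rewrite !xlnxE.
have [->|xn0] := eqVneq x 0; first by rewrite !mul0r mulr0 subr0.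
have xp : 0 < x by rewrite lt_def xn0 x0.
by rewrite ln_div ?posrE // mulrA mulrCA divff ?gt_eqF // mulr1 mulrBr.
Qed.

Variables (A B : finType) (q : A -> B -> R).

(* The conditional entropy H(B|A) of the joint weights q. *)
Definition cond_shannon : R := \sum_a (xlnx (\sum_b q a b) + shannon (q a)).

Lemma shannon_chain :
  shannon (fun ab : A * B => q ab.1 ab.2) =
  shannon (fun a => \sum_b q a b) + cond_shannon.
Proof.
by rewrite /cond_shannon /shannon sum_pair big_split /= addrA addNr add0r sumrN.
Qed.

Hypothesis q_ge0 : forall a b, 0 <= q a b.
Hypothesis q_sum1 : \sum_a \sum_b q a b = 1.

Lemma shannon_subadditive :
  shannon (fun ab : A * B => q ab.1 ab.2) <=
  shannon (fun a => \sum_b q a b) + shannon (fun b => \sum_a q a b).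
Proof.
set qa := fun a => \sum_b q a b; set qb := fun b => \sum_a q a b.
have qb_sum1 : \sum_b qb b = 1 by rewrite /qb exchange_big.
(* ln t <= t - 1 at t = qa qb / q, termwise *)
have termwise a b :
    q a b * ln (qa a) + q a b * ln (qb b) - xlnx (q a b) <= qa a * qb b - q a b.
  have [->|qn0] := eqVneq (q a b) 0.
    by rewrite !mul0r xlnxE mul0r !subr0 addr0 mulr_ge0 ?sumr_ge0.
  have qp : 0 < q a b by rewrite lt_def qn0 q_ge0.
  have qap : 0 < qa a.
    by apply: lt_le_trans qp _; rewrite /qa (bigD1 b) //= lerDl sumr_ge0.
  have qbp : 0 < qb b.
    by apply: lt_le_trans qp _; rewrite /qb (bigD1 a) //= lerDl sumr_ge0.
  have := ln_le_subr1 (divr_gt0 (mulr_gt0 qap qbp) qp).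
  rewrite ln_div ?posrE ?mulr_gt0 // lnM ?posrE // => /(ler_wpM2l (ltW qp)).
  by rewrite xlnxE !mulrBr mulrDr mulr1 [q a b * (_ / _)]mulrC divfK.
have sum_le0 :
    \sum_a \sum_b (q a b * ln (qa a) + q a b * ln (qb b) - xlnx (q a b)) <= 0.
  apply: le_trans (_ : \sum_a \sum_b (qa a * qb b - q a b) <= 0).
    by do 2![apply: ler_sum => ? _]; exact: termwise.
  by rewrite big1 // => a _; rewrite sumrB -mulr_sumr qb_sum1 mulr1 subrr.
have xlnx_qa : \sum_a xlnx (qa a) = \sum_a \sum_b q a b * ln (qa a).
  by apply: eq_bigr => a _; rewrite xlnxE mulr_suml.
have xlnx_qb : \sum_b xlnx (qb b) = \sum_a \sum_b q a b * ln (qb b).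
  by rewrite exchange_big; apply: eq_bigr => b _; rewrite xlnxE mulr_suml.
have sum_E : \sum_a \sum_b (q a b * ln (qa a) + q a b * ln (qb b) - xlnx (q a b)) =
    \sum_a xlnx (qa a) + \sum_b xlnx (qb b) - \sum_a \sum_b xlnx (q a b).
  rewrite xlnx_qa xlnx_qb -big_split -sumrB; apply: eq_bigr => a _.
  by rewrite -big_split -sumrB.
move: sum_le0; rewrite sum_E /shannon sum_pair; lra.
Qed.

End Shannon.

Lemma cond_shannon_add_le (R : realType) (A B : finType) (q : A -> B -> R) :
  (forall a b, 0 <= q a b) -> \sum_a \sum_b q a b = 1 ->
  cond_shannon q + cond_shannon (fun b a => q a b) <=
  shannon (fun ab : A * B => q ab.1 ab.2).
Proof.
move=> q_ge0 q_sum1.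
have shannon_swap : shannon (fun ba : B * A => q ba.2 ba.1) =
                    shannon (fun ab : A * B => q ab.1 ab.2).
  by rewrite /shannon !sum_pair exchange_big.
have := shannon_subadditive q_ge0 q_sum1.
have := shannon_chain q; have /= := shannon_chain (fun b a => q a b).
rewrite shannon_swap; lra.
Qed.

Section CoherenceValues.
Variables (R : realType) (X Y : finType).
Local Notation CC := R[i].
Local Notation XY := (X * Y)%type.

Definition coh_values (M : sqmx R XY) : set R :=
  [set s | exists (k : nat) (p : 'I_k -> R) (psi : 'I_k -> cvec R XY),
     pure_decomp M p psi /\ s = \sum_i p i * vN_entropy (dephase (ketbra (psi i)))].

Lemma coh_formE M : coh_form M = inf (coh_values M).
Proof. by []. Qed.

Lemma coh_values_ge0 M s : coh_values M s -> 0 <= s.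
Proof.
move=> [k [p [psi [[p_ge0 _ psi_unit _] ->]]]].
apply: sumr_ge0 => i _; rewrite mulr_ge0 // entropy_dephase_ketbra.
apply: shannon_ge0 => x; rewrite sumr_ge0 => [|y _]; last exact: sqnormc_ge0.
have /cvec_unitP <- := psi_unit i.
rewrite sum_pair (bigD1 x) //= lerDl.
by do 2![apply: sumr_ge0 => ? _]; exact: sqnormc_ge0.
Qed.

Lemma coh_values_decomp (I : finType) M (p : I -> R) (psi : I -> cvec R XY) :
  (forall i, 0 <= p i) -> \sum_i p i = 1 ->
  (forall i, \sum_t sqnormc (amp (psi i) t) = 1) ->
  (forall u v,
     ent M u v = \sum_i (p i)%:C * (amp (psi i) u * Num.conj (amp (psi i) v))) ->
  coh_values M (\sum_i p i * vN_entropy (dephase (ketbra (psi i)))).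
Proof.
move=> p_ge0 p_sum1 psi_unit entM.
exists #|I|, (fun j => p (enum_val j)), (fun j => psi (enum_val j)); split; last first.
  by rewrite big_ord_enum_rank; apply: eq_bigr => i _ /=; rewrite enum_rankK.
split => [//| | j |].
- by rewrite big_ord_enum_rank -p_sum1; apply: eq_bigr => i _ /=; rewrite enum_rankK.
- exact/cvec_unitP.
- apply: sqmxP => u v; rewrite entM ent_sum big_ord_enum_rank.
  by apply: eq_bigr => i _ /=; rewrite enum_rankK entZ ent_ketbra.
Qed.

Section Normalize.
Variables (t0 : XY) (g : XY -> CC).
Let w := \sum_t sqnormc (g t).

Let g_eq0 : ~~ (0 < w) -> forall t, g t = 0.
Proof.
move=> w_le0; apply: psumr_sqnormc_eq0; apply/eqP.
by rewrite eq_le leNgt w_le0 sumr_ge0 // => t _; exact: sqnormc_ge0.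
Qed.

Let w_eq0 : ~~ (0 < w) -> w = 0.
Proof. by move=> w_le0; rewrite /w big1 // => t _; rewrite g_eq0 // sqnormc0. Qed.

Definition normalize_cvec : cvec R XY :=
  if 0 < w then cvec_of (fun t => g t * (Num.sqrt w)^-1%:C)
  else cvec_of (fun t => (t == t0)%:R).

Lemma normalize_cvec_unit : \sum_t sqnormc (amp normalize_cvec t) = 1.
Proof.
rewrite /normalize_cvec; case: ifP => w_gt0.
  under eq_bigr => t _ do rewrite amp_cvec_of sqnormcMr.
  by rewrite -mulr_suml exprVn sqr_sqrtr ?ltW // divff ?gt_eqF.
rewrite (bigD1 t0) //= amp_cvec_of eqxx sqnormc1 big1 ?addr0 // => t /negbTE.
by rewrite amp_cvec_of => ->; exact: sqnormc0.
Qed.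

Lemma normalize_cvec_outer u v :
  g u * Num.conj (g v) =
  w%:C * (amp normalize_cvec u * Num.conj (amp normalize_cvec v)).
Proof.
rewrite /normalize_cvec; case: ifPn => [w_gt0|w_le0].
  have conj_real (c : R) : Num.conj c%:C = c%:C :> CC by exact: conjc_real.
  rewrite !amp_cvec_of rmorphM /= conj_real.
  have -> : w%:C = (Num.sqrt w)%:C * (Num.sqrt w)%:C :> CC.
    by rewrite -rmorphM /= -expr2 sqr_sqrtr ?ltW.
  have sqrt_neq0 : (Num.sqrt w)%:C != 0 :> CC.
    by rewrite -(rmorph0 (real_complex R)) (inj_eq (@complexI R)) gt_eqF ?sqrtr_gt0.
  by rewrite fmorphV /=; field.
by rewrite (g_eq0 w_le0 u) (w_eq0 w_le0) !mul0r.
Qed.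

Lemma normalize_cvec_entropy :
  w * vN_entropy (dephase (ketbra normalize_cvec)) =
  xlnx w + shannon (fun x : X => \sum_y sqnormc (g (x, y))).
Proof.
have [w_gt0|w_le0] := boolP (0 < w); last first.
  rewrite w_eq0 // mul0r xlnx0 add0r /shannon big1 ?oppr0 // => x _.
  by rewrite big1 ?xlnx0 // => y _; rewrite g_eq0 // sqnormc0.
rewrite /normalize_cvec w_gt0 entropy_dephase_ketbra /shannon mulrN mulr_sumr.
under eq_bigr => x _.
  rewrite (eq_bigr (fun y => sqnormc (g (x, y)) / w)) -?mulr_suml; last first.
    by move=> y _; rewrite amp_cvec_of sqnormcMr exprVn sqr_sqrtr ?ltW.
  rewrite mulr_xlnx_div ?sumr_ge0 // => [|y _]; last exact: sqnormc_ge0.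
  over.
rewrite sumrB -mulr_suml -(sum_pair (fun t => sqnormc (g t))) -/w xlnxE.
by rewrite opprB addrC.
Qed.
End Normalize.

Lemma coh_values_slices (I K : finType) M (p : I -> R) (f : I -> K -> XY -> CC) :
  (forall i, 0 <= p i) -> \sum_i p i = 1 ->
  (forall i, \sum_k \sum_t sqnormc (f i k t) = 1) ->
  (forall u v, ent M u v = \sum_i (p i)%:C * \sum_k (f i k u * Num.conj (f i k v))) ->
  coh_values M (\sum_i p i * cond_shannon (fun k x => \sum_y sqnormc (f i k (x, y)))).
Proof.
move=> p_ge0 p_sum1 f_unit entM.
have [t0 _] : exists t0 : XY, True.
  have [i0 _|I0] := pickP (@predT I); last first.
    by move: p_sum1; rewrite big_pred0 // => /eqP; rewrite eq_sym oner_eq0.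
  have [t0 _|XY0] := pickP (@predT XY); first by exists t0.
  move: (f_unit i0); rewrite big1 => [/eqP|k _]; last by rewrite big_pred0.
  by rewrite eq_sym oner_eq0.
pose w i k := \sum_t sqnormc (f i k t).
pose phi (ik : I * K) := normalize_cvec t0 (f ik.1 ik.2).
have value_eq :
    \sum_(ik : I * K) p ik.1 * w ik.1 ik.2 * vN_entropy (dephase (ketbra (phi ik))) =
    \sum_i p i * cond_shannon (fun k x => \sum_y sqnormc (f i k (x, y))).
  rewrite sum_pair; apply: eq_bigr => i _; rewrite mulr_sumr.
  apply: eq_bigr => k _ /=; rewrite -mulrA normalize_cvec_entropy.
  by rewrite -(sum_pair (fun t => sqnormc (f i k t))).
rewrite -value_eq; apply: coh_values_decomp => [ik||ik|u v].
- by rewrite mulr_ge0 ?sumr_ge0 // => t _; exact: sqnormc_ge0.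
- rewrite sum_pair -p_sum1; apply: eq_bigr => i _ /=.
  by rewrite -mulr_sumr f_unit mulr1.
- exact: normalize_cvec_unit.
rewrite entM sum_pair; apply: eq_bigr => i _; rewrite mulr_sumr.
by apply: eq_bigr => k _; rewrite (normalize_cvec_outer t0) rmorphM !mulrA.
Qed.
End CoherenceValues.

Lemma coh_values_density (R : realType) (X Y : finType) (M : sqmx R (X * Y)%type) :
  density M -> exists s, coh_values M s.
Proof.
move=> [[M_herm M_psd] M_tr1].
have /orthomx_spectralP M_eq : M \is normalmx by apply/normalmxP; rewrite M_herm.
set P := spectralmx M in M_eq; set d := spectral_diag M in M_eq.
have P_unitary : P \is unitarymx := spectral_unitarymx M.
rewrite invmx_unitary // in M_eq.
have PPt : P *m P ^t* = 1%:M by apply/unitarymxP.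
pose v i : cvec R (X * Y)%type := col i (P ^t*).
have vE i : v i = P ^t* *m delta_mx i 0 by rewrite /v colE.
have vt i : (v i) ^t* = delta_mx 0 i *m P.
  by rewrite vE trmx_mul map_mxM trmxCK trmx_delta map_delta_mx.
have v_unit i : (v i) ^t* *m v i = 1%:M.
  rewrite vt vE mulmxA -(mulmxA _ P) PPt mulmx1 mul_delta_mx.
  by apply/matrixP => a b; rewrite !ord1 !mxE.
have d_ge0 i : 0 <= d 0 i.
  have := M_psd (v i); rewrite M_eq vt vE !mulmxA.
  rewrite -(mulmxA (delta_mx 0 i) P (P ^t*)) PPt mulmx1.
  rewrite -(mulmxA (delta_mx 0 i *m diag_mx d) P (P ^t*)) PPt mulmx1.
  by rewrite -rowE -colE !mxE eqxx mulr1n.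
have d_real i : d 0 i = (complex.Re (d 0 i))%:C by apply: complex_ge0_real.
exists (\sum_i complex.Re (d 0 i) * vN_entropy (dephase (ketbra (v i)))).
apply: coh_values_decomp => [i||i|a b].
- by rewrite -lecR -d_real.
- apply: (@complexI R); rewrite rmorph_sum /=.
  rewrite (eq_bigr (fun i => d 0 i)) => [|i _]; last by rewrite -d_real.
  by rewrite -mxtrace_diag -[RHS]M_tr1 M_eq mxtrace_mulC mulmxA PPt mul1mx.
- exact/cvec_unitP.
rewrite /ent M_eq mxE; apply: eq_bigr => i _.
rewrite mul_mx_diag !mxE /amp /v !mxE conjCK -d_real.
by rewrite mulrA [_ * d 0 i]mulrC.
Qed.

Lemma inf_add_le (R : realType) (S S1 S2 : set R) :
  S !=set0 -> has_lbound S1 -> has_lbound S2 ->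
  (forall s, S s -> exists s1 s2, [/\ S1 s1, S2 s2 & s1 + s2 <= s]) ->
  inf S1 + inf S2 <= inf S.
Proof.
move=> S_neq0 S1_lb S2_lb S_split; apply: lb_le_inf => // s /S_split[s1 [s2 [S1s1 S2s2]]].
by apply: le_trans; apply: lerD; apply: ge_inf.
Qed.

Section Tripartite.
Variables (R : realType) (A B C : finType) (rho : sqmx R ((A * B) * C)%type).
Variables (k : nat) (p : 'I_k -> R) (psi : 'I_k -> cvec R ((A * B) * C)%type).
Hypothesis rho_decomp : pure_decomp rho p psi.

Let q i a b := \sum_c sqnormc (amp (psi i) ((a, b), c)).

Let psi_unit i : \sum_t sqnormc (amp (psi i) t) = 1.
Proof. by case: rho_decomp => _ _ /(_ i)/cvec_unitP. Qed.

Let ent_rho x y :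
  ent rho x y = \sum_i (p i)%:C * (amp (psi i) x * Num.conj (amp (psi i) y)).
Proof.
case: rho_decomp => _ _ _ ->; rewrite ent_sum.
by apply: eq_bigr => i _; rewrite entZ ent_ketbra.
Qed.

Lemma regroup_decomp_value :
  coh_values (regroup rho) (\sum_i p i * shannon (fun a => \sum_b q i a b)).
Proof.
pose phi i := cvec_of (fun t : A * (B * C) => amp (psi i) ((t.1, t.2.1), t.2.2)).
have -> : \sum_i p i * shannon (fun a => \sum_b q i a b) =
          \sum_i p i * vN_entropy (dephase (ketbra (phi i))).
  apply: eq_bigr => i _; rewrite entropy_dephase_ketbra; congr (_ * shannon _).
  apply: funext => a; rewrite sum_pair.
  by do 2![apply: eq_bigr => ? _]; rewrite amp_cvec_of.
case: rho_decomp => p_ge0 p_sum1 _ _.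
apply: (coh_values_decomp (M := regroup rho) p_ge0 p_sum1) => [i|u v].
  rewrite -(psi_unit i) !sum_pair; apply: eq_bigr => a _; rewrite sum_pair.
  by do 2![apply: eq_bigr => ? _]; rewrite amp_cvec_of.
by rewrite ent_mkmx ent_rho; apply: eq_bigr => i _; rewrite !amp_cvec_of.
Qed.

Lemma ptrace_A_decomp_value :
  coh_values (ptrace_A rho) (\sum_i p i * cond_shannon (q i)).
Proof.
case: rho_decomp => p_ge0 p_sum1 _ _.
apply: (coh_values_slices (f := fun i a t => amp (psi i) ((a, t.1), t.2))) => // [i|u v].
  by rewrite -(psi_unit i) !sum_pair; apply: eq_bigr => a _; rewrite sum_pair.
rewrite ent_mkmx; under eq_bigr do rewrite ent_rho.
by rewrite exchange_big; apply: eq_bigr => i _; rewrite mulr_sumr.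
Qed.

Lemma ptrace_B_decomp_value :
  coh_values (ptrace_B rho) (\sum_i p i * cond_shannon (fun b a => q i a b)).
Proof.
case: rho_decomp => p_ge0 p_sum1 _ _.
apply: (coh_values_slices (f := fun i b t => amp (psi i) ((t.1, b), t.2))) => // [i|u v].
  rewrite -(psi_unit i) exchange_big !sum_pair.
  by apply: eq_bigr => a _; rewrite exchange_big.
rewrite ent_mkmx; under eq_bigr do rewrite ent_rho.
by rewrite exchange_big; apply: eq_bigr => i _; rewrite mulr_sumr.
Qed.

End Tripartite.

Lemma coh_values_tripartite (R : realType) (A B C : finType)
    (rho : sqmx R ((A * B) * C)%type) s :
  coh_values rho s ->
  exists s1 s2 s3, [/\ coh_values (regroup rho) s1, coh_values (ptrace_A rho) s2,
    coh_values (ptrace_B rho) s3, s1 + s2 = s & s3 + s2 <= s].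
Proof.
move=> [k [p [psi [rho_decomp ->]]]].
have [p_ge0 _ psi_unit _] := rho_decomp.
pose q i a b := \sum_c sqnormc (amp (psi i) ((a, b), c)).
have q_ge0 i a b : 0 <= q i a b by apply: sumr_ge0 => c _; exact: sqnormc_ge0.
have q_sum1 i : \sum_a \sum_b q i a b = 1.
  by have /cvec_unitP <- := psi_unit i; rewrite !sum_pair.
have value_eq : \sum_i p i * vN_entropy (dephase (ketbra (psi i))) =
                \sum_i p i * shannon (fun ab : A * B => q i ab.1 ab.2).
  apply: eq_bigr => i _; rewrite entropy_dephase_ketbra.
  by congr (_ * shannon _); apply: funext => -[].
exists (\sum_i p i * shannon (fun a => \sum_b q i a b)),
       (\sum_i p i * cond_shannon (q i)),
       (\sum_i p i * cond_shannon (fun b a => q i a b)).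
split; [ exact: regroup_decomp_value | exact: ptrace_A_decomp_value
       | exact: ptrace_B_decomp_value | | ];
  rewrite value_eq -big_split /=.
  by apply: eq_bigr => i _; rewrite -mulrDr shannon_chain.
apply: ler_sum => i _; rewrite -mulrDr ler_wpM2l // addrC.
exact: cond_shannon_add_le.
Qed.

Theorem proposition3 (R : realType) (A B C : finType)
    (rho : sqmx R ((A * B) * C)%type) :
  density rho ->
  coh_form (regroup rho) + coh_form (ptrace_A rho) <= coh_form rho /\
  coh_form (ptrace_B rho) + coh_form (ptrace_A rho) <= coh_form rho.
Proof.
move=> rho_density; have rho_values := coh_values_density rho_density.
have lbound0 (X Y : finType) (M : sqmx R (X * Y)%type) : has_lbound (coh_values M).
  by exists 0 => s /coh_values_ge0.
rewrite !coh_formE; split; apply: inf_add_le => // s /coh_values_tripartite.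
  by move=> [s1 [s2 [s3 [? ? _ <- _]]]]; exists s1, s2.
by move=> [s1 [s2 [s3 [_ ? ? _ ?]]]]; exists s3, s2.
Qed.
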